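(* For every $r\ge3$ and every pair $\{P,Q\}$ of $r$-patterns forming a mismatch, there exists $1\le j\le r$ such that $\{P^{-j},Q^{-j}\}$ is also a mismatch.
   Context: An $r$-pattern is an ordered $r$-matching of size 2, written as a word over $\{A,B\}$ in which each letter appears $r$ times and which begins with $A$. For an $r$-pattern $P$ and $1\le j\le r$, $P^{-j}$ is the $(r-1)$-pattern obtained from $P$ by deleting the $j$-th occurrence of $A$ and the $j$-th occurrence of $B$ (e.g., for $P=AABBBABA$, $P^{-1}=P^{-2}=ABBABA$ and $P^{-3}=AABBBA$). An $r$-pattern $P$ is collectable if it can be split into consecutive blocks $P=S_1\cdots S_s$ each of the form $A^tB^t$ or $B^tA^t$ ($t\ge1$); this splitting is unique and $\lambda_P=(|S_1|/2,\dots,|S_s|/2)$ is the composition of $P$. A pair $\{P,Q\}$ of $r$-patterns is a mismatch if exactly one of $P,Q$ is collectable, or both are collectable and $\lambda_P\neq\lambda_Q$. *)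

From mathcomp Require Import all_boot.
Set Implicit Arguments. Unset Strict Implicit. Unset Printing Implicit Defensive.

(* A word over {A,B} is a seq bool: true = A, false = B. *)
Definition is_pattern (r : nat) (P : seq bool) : Prop :=
  [/\ size P = (2 * r)%N, count id P = r & head false P = true].

(* remove the j-th (1-indexed) occurrence of letter a in w *)
Fixpoint del_occ (a : bool) (j : nat) (w : seq bool) : seq bool :=
  match w with
  | [::] => [::]
  | x :: w' => if x == a then (if j == 1 then w' else x :: del_occ a j.-1 w')
               else x :: del_occ a j w'
  end.

(* P^{-j}: delete the j-th A and the j-th B *)
Definition pdel (j : nat) (P : seq bool) : seq bool :=
  del_occ false j (del_occ true j P).

Definition block (b : bool) (t : nat) : seq bool := nseq t b ++ nseq t (~~ b).

Definition decomp (P : seq bool) (lam : seq nat) : Prop :=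
  exists bs : seq (bool * nat),
    [/\ all (fun bt => 0 < bt.2) bs,
        flatten [seq block bt.1 bt.2 | bt <- bs] = P
      & [seq bt.2 | bt <- bs] = lam].

Definition collectable (P : seq bool) : Prop := exists lam, decomp P lam.

Definition mismatch (P Q : seq bool) : Prop :=
  (collectable P /\ ~ collectable Q) \/ (~ collectable P /\ collectable Q) \/
  (collectable P /\ collectable Q /\
     forall lP lQ, decomp P lP -> decomp Q lQ -> lP <> lQ).

From mathcomp Require Import all_boot zify.
From Stdlib Require Import Classical.
Set Implicit Arguments. Unset Strict Implicit. Unset Printing Implicit Defensive.

(* Deleting the j-th A and the j-th B never destroys collectability, and in a
   collectable word the first (last) A and B lie in the first (last) block, so
   the compositions of P^{-1} and P^{-r} arise from lambda_P by decreasing its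
   first, resp. last, part.  For r >= 3 these two shrinkings determine lambda_P,
   so two different compositions are separated by j = 1 or j = r.
   If P is collectable and Q is not, cut Q = E R at its first return to
   balance, E indecomposable.  If R is nonempty, deleting inside E (j = 1, when
   E is a block) or inside R (j = r, otherwise) keeps Q^{-j} non-collectable.
   If Q = E is indecomposable, any collectable Q^{-1} or Q^{-r} is a single
   block, whereas P^{-1} or P^{-r} still has two blocks unless P = A^r B^r or
   B^r A^r; in that last case j = 2 works, because Q^{-2} being a single block
   forces Q = A^r B^r. *)

Definition cnt (a : bool) (w : seq bool) : nat := count (pred1 a) w.

Arguments cnt : simpl never.

Lemma cnt_cons a x w : cnt a (x :: w) = (x == a) + cnt a w.
Proof. by []. Qed.

Lemma cnt_cat a u v : cnt a (u ++ v) = cnt a u + cnt a v.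
Proof. exact: count_cat. Qed.

Lemma cnt_nseq a n x : cnt a (nseq n x) = (x == a) * n.
Proof. exact: count_nseq. Qed.

Lemma cnt_block a b t : cnt a (block b t) = t.
Proof. by rewrite cnt_cat !cnt_nseq; case: a; case: b => /=; lia. Qed.

Lemma cnt_true_false w : cnt true w + cnt false w = size w.
Proof. by elim: w => //= x w IH; rewrite !cnt_cons; case: x IH => /=; lia. Qed.

Ltac case_ifs :=
  repeat match goal with |- context [if ?b then _ else _] => case: (boolP b) => ? end;
  try lia.

Section DeleteOccurrence.

Variable a : bool.

Lemma del_occ0 w : del_occ a 0 w = w.
Proof. by elim: w => //= x w ->; case: (x == a). Qed.

Lemma del_occ_cat j u v :
  del_occ a j (u ++ v) =
  if j <= cnt a u then del_occ a j u ++ v else u ++ del_occ a (j - cnt a u) v.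
Proof.
elim: u j => [|x u IH] j /=; first by case: j => [|j]; rewrite ?del_occ0.
rewrite cnt_cons; case: (x =P a) => _ /=; last by rewrite IH; case: ifP.
case: j => [|[|j]] //=; rewrite IH; case_ifs;
  by do 2 congr (_ :: _); congr (_ ++ _); congr del_occ; lia.
Qed.

Lemma cnt_del_occ j w :
  cnt a (del_occ a j w) = if 0 < j <= cnt a w then (cnt a w).-1 else cnt a w.
Proof.
elim: w j => [|x w IH] j /=; first by case_ifs.
case: (x =P a) => [->|Hx].
  case: (j =P 1) => [->|Hj] /=; first by rewrite cnt_cons eqxx; case_ifs.
  by rewrite !cnt_cons eqxx IH; case_ifs.
by move/eqP/negbTE: Hx => Hx; rewrite !cnt_cons Hx IH.
Qed.

Lemma cnt_del_occ_other b j w : b != a -> cnt b (del_occ a j w) = cnt b w.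
Proof.
move=> Hba; elim: w j => [|x w IH] j //=.
case: (x =P a) => [->|_]; last by rewrite !cnt_cons IH.
by case: (j == 1); rewrite !cnt_cons ?IH eq_sym (negbTE Hba).
Qed.

Lemma del_occ_nseq j n : 0 < j <= n -> del_occ a j (nseq n a) = nseq n.-1 a.
Proof.
elim: n j => [|n IH] j Hj /=; first lia.
rewrite eqxx; case: (j =P 1) => [_ //|Hj1].
case: n IH Hj => [|n] IH Hj; first lia.
by rewrite IH //; lia.
Qed.

Lemma del_occ_eq_nseq j n w :
  0 < j <= cnt a w -> del_occ a j w = nseq n a -> w = nseq n.+1 a.
Proof.
elim: w j n => [|x w IH] j n; first by rewrite /cnt /=; lia.
rewrite cnt_cons /=; case: (x =P a) => [->|Hx] /=; last by case: n => [|n] _ //= [/Hx].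
case: (j =P 1) => [_ _ -> //|Hj Hcnt].
case: n => [|n] //= [E]; rewrite (IH j.-1 n) //; lia.
Qed.

Lemma del_occ_cons j x w : del_occ a j (x :: w) =
  if x == a then (if j == 1 then w else x :: del_occ a j.-1 w) else x :: del_occ a j w.
Proof. by []. Qed.

Lemma del_occ_preimage_l j w u v : del_occ a j w = u ++ v -> j <= cnt a u ->
  exists2 u', w = u' ++ v & del_occ a j u' = u.
Proof.
elim: u w j => [|y u IH] w j.
  by rewrite /cnt /= leqn0 => Ew /eqP Ej; exists [::]; rewrite // -Ew Ej del_occ0.
case: w => [//|x w]; rewrite del_occ_cons cnt_cons.
case: (x =P a) => [Hx|/eqP/negbTE Hx].
  case: (j =P 1) => [Hj Ew _|/eqP/negbTE Hj [<-] /IH Ew Hc].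
    by exists [:: x, y & u]; rewrite ?Ew // del_occ_cons Hx eqxx Hj.
  have [u' -> <-] := Ew ltac:(rewrite Hx eqxx in Hc; lia).
  by exists (x :: u'); rewrite // del_occ_cons Hx eqxx Hj.
case=> <- /IH Ew Hc; have [u' -> <-] := Ew ltac:(rewrite Hx in Hc; lia).
by exists (x :: u'); rewrite // del_occ_cons Hx.
Qed.

(* With only [cnt a u < j] the deleted letter could be the one right after u. *)
Lemma del_occ_preimage_r j w u v : del_occ a j w = u ++ v -> (cnt a u).+1 < j ->
  exists2 v', w = u ++ v' & del_occ a (j - cnt a u) v' = v.
Proof.
elim: u w j => [|y u IH] w j; first by move=> Ew _; exists w; rewrite // subn0.
case: w => [//|x w]; rewrite del_occ_cons cnt_cons.
case: (x =P a) => [Hx|/eqP/negbTE Hx].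
  case: (j =P 1) => [-> _ Hc|_ [<-] /IH Ew Hc]; first lia.
  have [v' -> <-] := Ew ltac:(rewrite Hx eqxx in Hc; lia).
  by exists v'; rewrite // Hx eqxx; congr del_occ; lia.
case=> <- /IH Ew Hc; have [v' -> <-] := Ew ltac:(rewrite Hx in Hc; lia).
by exists v'; rewrite // Hx.
Qed.

End DeleteOccurrence.

Lemma pdel0 w : pdel 0 w = w.
Proof. by rewrite /pdel !del_occ0. Qed.

Lemma pdel_catl j u v : j <= cnt true u -> j <= cnt false u ->
  pdel j (u ++ v) = pdel j u ++ v.
Proof. by move=> Ht Hf; rewrite /pdel del_occ_cat Ht del_occ_cat cnt_del_occ_other ?Hf. Qed.

Lemma pdel_catr j u v : cnt true u = cnt false u -> cnt true u < j ->
  pdel j (u ++ v) = u ++ pdel (j - cnt true u) v.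
Proof.
move=> Hu Hj; rewrite /pdel del_occ_cat ifF; last lia.
by rewrite del_occ_cat ifF -Hu //; lia.
Qed.

Lemma pdel_block j b t : 0 < j <= t -> pdel j (block b t) = block b t.-1.
Proof.
move=> Hj; rewrite /pdel /block del_occ_cat cnt_nseq; case: b => /=.
  rewrite mul1n ifT ?del_occ_nseq //; last lia.
  by rewrite del_occ_cat cnt_nseq mul0n ifF ?subn0 ?del_occ_nseq //; lia.
rewrite mul0n ifF ?subn0 ?del_occ_nseq //; last lia.
by rewrite del_occ_cat cnt_nseq mul1n ifT ?del_occ_nseq //; lia.
Qed.

Lemma pdel_block_cat j b t w : 0 < j ->
  pdel j (block b t ++ w) =
  if j <= t then block b t.-1 ++ w else block b t ++ pdel (j - t) w.
Proof.
move=> Hj; case: ifP => Hjt.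
  by rewrite pdel_catl ?cnt_block // pdel_block ?Hj.
by rewrite pdel_catr !cnt_block //; lia.
Qed.

(** * Block decompositions *)

Definition blocks (bs : seq (bool * nat)) : seq bool :=
  flatten [seq block bt.1 bt.2 | bt <- bs].

Definition pos_block (bt : bool * nat) : bool := 0 < bt.2.

Arguments pos_block /.

Lemma blocks_cons bt bs : blocks (bt :: bs) = block bt.1 bt.2 ++ blocks bs.
Proof. by []. Qed.

Arguments blocks : simpl never.

Lemma blocks_filter bs : blocks (filter pos_block bs) = blocks bs.
Proof. by elim: bs => //= [[b [|t]]] bs IH; rewrite /= blocks_cons IH. Qed.

Lemma cnt_blocks a bs : cnt a (blocks bs) = sumn (map snd bs).
Proof. by elim: bs => [|[b t] bs IH] //=; rewrite blocks_cons cnt_cat cnt_block IH. Qed.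

Lemma decomp_blocks bs : all pos_block bs -> decomp (blocks bs) (map snd bs).
Proof. by exists bs. Qed.

Lemma decomp_blocks_filter bs :
  decomp (blocks bs) (filter (fun t => 0 < t) (map snd bs)).
Proof. by rewrite filter_map -blocks_filter; apply/decomp_blocks/filter_all. Qed.

Lemma collectable_blocks bs : collectable (blocks bs).
Proof. by eexists; apply: decomp_blocks_filter. Qed.

Lemma blocks1 b t : blocks [:: (b, t)] = block b t.
Proof. exact: cats0. Qed.

Lemma decomp_block b t : 0 < t -> decomp (block b t) [:: t].
Proof. by move=> Ht; rewrite -blocks1; apply: decomp_blocks; rewrite /= Ht. Qed.

Lemma decomp_single w t : decomp w [:: t] -> exists b, w = block b t.
Proof. by case=> [[|[b t'] [|? ?]] [//= _ <- [<-]]]; exists b; exact: blocks1. Qed.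

Lemma collectableP w : collectable w <-> exists2 bs, all pos_block bs & blocks bs = w.
Proof.
split; first by case=> l [bs [Hbs Ew _]]; exists bs.
by case=> bs _ <-; apply: collectable_blocks.
Qed.

Lemma nseq_cat_inj b t t' w w' :
  nseq t b ++ ~~ b :: w = nseq t' b ++ ~~ b :: w' -> t = t' /\ w = w'.
Proof.
elim: t t' => [|t IH] [|t'] /=; [by case | by case: b | by case: b {IH} => -[] |].
by case=> /IH [-> ->].
Qed.

Lemma block_cat_inj b t b' t' w w' : 0 < t -> 0 < t' ->
  block b t ++ w = block b' t' ++ w' -> [/\ b = b', t = t' & w = w'].
Proof.
case: t t' => [|t] [|t'] // _ _ [<-]; rewrite -!catA /= => /nseq_cat_inj [<-].
by move/(congr1 (drop t)); rewrite !drop_size_cat ?size_nseq.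
Qed.

Lemma blocks_cat_prefix bs1 bs w : all pos_block bs1 -> all pos_block bs ->
  blocks bs1 ++ w = blocks bs -> exists2 bs2, bs = bs1 ++ bs2 & blocks bs2 = w.
Proof.
elim: bs1 bs => [|[b t] bs1 IH] bs; first by move=> _ _ Ew; exists bs.
case: bs => [|[b' t'] bs] /= /andP [Ht H1].
  by rewrite /blocks /=; case: t Ht.
move=> /andP [Ht' H]; rewrite !blocks_cons -catA => /block_cat_inj.
by case/(_ Ht Ht') => /= -> -> /(IH _ H1 H) [bs2 -> <-]; exists bs2.
Qed.

Lemma blocks_inj bs1 bs2 : all pos_block bs1 -> all pos_block bs2 ->
  blocks bs1 = blocks bs2 -> bs1 = bs2.
Proof.
move=> H1 H2; rewrite -[blocks bs1]cats0 => /(blocks_cat_prefix H1 H2) [bs3 Ebs2].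
move: H2; rewrite {}Ebs2 all_cat => /andP [_].
case: bs3 => [|[b t] bs3]; first by rewrite cats0.
by rewrite blocks_cons /= => /andP [Ht _]; case: t Ht.
Qed.

Lemma decomp_uniq w l1 l2 : decomp w l1 -> decomp w l2 -> l1 = l2.
Proof.
case=> bs1 [H1 E1 <-] [bs2 [H2 E2 <-]].
by rewrite (@blocks_inj bs1 bs2) //; rewrite /blocks E1 E2.
Qed.

Lemma collectable_block_cat b t w : collectable (block b t ++ w) <-> collectable w.
Proof.
case: t => [|t]; first by [].
split; last by case/collectableP => bs _ <-; apply: (collectable_blocks ((b, t.+1) :: bs)).
case/collectableP => bs Hbs Ew.
have Ew' : blocks [:: (b, t.+1)] ++ w = blocks bs by rewrite Ew /blocks /= cats0.
have [bs2 _ <-] := blocks_cat_prefix (isT : all pos_block [:: (b, t.+1)]) Hbs Ew'.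
exact: collectable_blocks.
Qed.

Lemma collectable_pdel j w : collectable w -> collectable (pdel j w).
Proof.
case/collectableP => bs _ <-; elim: bs j => [|[b t] bs IH] [|j];
  rewrite ?pdel0; try exact: collectable_blocks.
  exact: (collectable_blocks [::]).
rewrite blocks_cons pdel_block_cat //; case: ifP => _ /=.
  by apply/collectable_block_cat/collectable_blocks.
exact/collectable_block_cat/IH.
Qed.

(** * Indecomposable words *)

Definition balanced (w : seq bool) : Prop := cnt true w = cnt false w.

Definition indecomposable (w : seq bool) : Prop :=
  [/\ w <> [::], balanced w &
      forall u v, w = u ++ v -> balanced u -> u = [::] \/ v = [::]].

Lemma balanced_cat u v : balanced u -> balanced v -> balanced (u ++ v).
Proof. by rewrite /balanced !cnt_cat => -> ->. Qed.

Lemma balanced_catr u v : balanced (u ++ v) -> balanced u -> balanced v.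
Proof. by rewrite /balanced !cnt_cat; lia. Qed.

Lemma balanced_cnt_gt0 w : balanced w -> w <> [::] -> 0 < cnt true w.
Proof.
rewrite /balanced => Hbal Hne; have := cnt_true_false w.
by case: w Hne Hbal => //= *; lia.
Qed.

Lemma indecomposable_block b t : 0 < t -> indecomposable (block b t).
Proof.
move=> Ht; split; [by case: t Ht | by rewrite /balanced !cnt_block |] => u v Euv.
have Hsize : size u + size v = t + t by rewrite -size_cat -Euv size_cat !size_nseq.
have -> : u = take (size u) (block b t) by rewrite Euv take_size_cat.
rewrite /balanced take_cat size_nseq; case: ltnP => Hu.
  rewrite take_nseq ?(ltnW Hu) // !cnt_nseq => Hbal; left; apply/nilP.
  by rewrite /nilp size_nseq; case: b {Euv} Hbal => /=; lia.
rewrite take_nseq ?cnt_cat ?cnt_nseq; last lia.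
by move=> Hbal; right; apply/nilP; rewrite /nilp; case: b {Euv} Hbal => /=; lia.
Qed.

Lemma balanced_first_return w : balanced w -> w <> [::] ->
  exists E R, [/\ w = E ++ R, indecomposable E & balanced R].
Proof.
elim: {w}(size w).+1 {-2}w (ltnSn (size w)) => // n IH w Hsize Hw Hne.
case: (classic (indecomposable w)) => Hind.
  by exists w, [::]; rewrite cats0.
have [u [v [Euv Hu Hune Hvne]]] :
    exists u v, [/\ w = u ++ v, balanced u, u <> [::] & v <> [::]].
  apply: NNPP => Hno; apply: Hind; split=> // u v Euv Hu.
  by apply: NNPP => Huv; apply: Hno; exists u, v; split=> // Hnil; apply: Huv; [left|right].
have Hsu : size u < n by move: Hsize; rewrite Euv size_cat; case: v Hvne {Euv} => //= *; lia.
have [E [R [Eu HE HR]]] := IH u Hsu Hu Hune.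
exists E, (R ++ v); split=> //; first by rewrite Euv Eu catA.
by apply: balanced_cat => //; apply: (balanced_catr (u := u)); rewrite -?Euv.
Qed.

Lemma indecomposable_prefix_eq E1 E2 w1 w2 : indecomposable E1 -> indecomposable E2 ->
  E1 ++ w1 = E2 ++ w2 -> E1 = E2.
Proof.
wlog Hs : E1 E2 w1 w2 / size E1 <= size E2.
  move=> WL H1 H2 E; case: (leqP (size E1) (size E2)) => Hs.
    exact: (WL _ _ _ _ Hs H1 H2 E).
  by apply/esym/(WL E2 E1 w2 w1) => //; lia.
move=> [Hne1 Hb1 _] [_ _ Hind2] E.
have E2E : E2 = E1 ++ take (size E2 - size E1) w1.
  by move: (take_size_cat w2 (erefl (size E2))); rewrite -E take_cat ltnNge Hs /= => ->.
by case: (Hind2 _ _ E2E Hb1) => [/Hne1 //|Hnil]; rewrite E2E Hnil cats0.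
Qed.

Lemma not_collectable_indecomposable_cat E w :
  indecomposable E -> (forall b t, E <> block b t) -> ~ collectable (E ++ w).
Proof.
move=> HE Hnb /collectableP [[|[b t] bs] /=].
  by case: HE => HEne _ _; case: E HEne Hnb.
case/andP=> Ht _; rewrite blocks_cons.
by move/(indecomposable_prefix_eq (indecomposable_block b Ht) HE)/esym/Hnb.
Qed.

Lemma pdel_preimage_l j w u v : 0 < j -> pdel j w = u ++ v ->
  j <= cnt true u -> j <= cnt false u ->
  exists2 u', w = u' ++ v & cnt true u' = (cnt true u).+1 /\ cnt false u' = (cnt false u).+1.
Proof.
move=> Hj Ew Ht Hf; have [u1 Ew1 Hu1] := del_occ_preimage_l Ew Hf.
have Ht1 : j <= cnt true u1 by rewrite -Hu1 cnt_del_occ_other in Ht.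
have [u2 -> Hu2] := del_occ_preimage_l Ew1 Ht1.
exists u2 => //; move: Ht Hf; rewrite -Hu1 -Hu2.
rewrite !(@cnt_del_occ_other false true) // !cnt_del_occ !(@cnt_del_occ_other true false) //.
by case_ifs.
Qed.

Lemma pdel_preimage_r j w u v : pdel j w = u ++ v ->
  (cnt true u).+1 < j -> (cnt false u).+1 < j -> exists v', w = u ++ v'.
Proof.
move=> Ew Ht Hf; have [v1 Ew1 _] := del_occ_preimage_r Ew Hf.
by have [v2 -> _] := del_occ_preimage_r Ew1 Ht; exists v2.
Qed.

Lemma decomp_pdel1_indecomposable w l : indecomposable w -> decomp (pdel 1 w) l -> size l <= 1.
Proof.
move=> [_ _ Hind] [bs [Hpos]]; rewrite -/(blocks bs) => Ew <-.
case: bs Hpos Ew => [|[b t] [|[b' t'] bs]] //= /and3P [Ht Ht' _].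
rewrite !blocks_cons /= => /esym Ew.
have [u Ewu [Hut Huf]] :=
  pdel_preimage_l (isT : 0 < 1) Ew ltac:(by rewrite cnt_block) ltac:(by rewrite cnt_block).
case: (Hind _ _ Ewu); first by rewrite /balanced Hut Huf !cnt_block.
  by move=> Eu; move: Hut; rewrite Eu.
by case: t' Ht' {Ew Ewu}.
Qed.

Lemma decomp_pdel_last_indecomposable w l :
  indecomposable w -> decomp (pdel (cnt true w) w) l -> size l <= 1.
Proof.
move=> [Hne Hbal Hind] [bs [Hpos]]; rewrite -/(blocks bs) => Ew <-.
case: bs Hpos Ew => [|[b t] [|[b' t'] bs]] //= /and3P [Ht Ht' _] Ew.
have Hw := balanced_cnt_gt0 Hbal Hne.
have Hcnt : cnt true (pdel (cnt true w) w) = (cnt true w).-1.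
  by rewrite (@cnt_del_occ_other false true) // cnt_del_occ; case_ifs.
move: Hcnt; rewrite -Ew cnt_blocks /= => Hcnt.
have [v Ewv] := pdel_preimage_r (esym Ew) ltac:(rewrite cnt_block /=; lia)
  ltac:(rewrite cnt_block /=; lia).
case: (Hind _ _ Ewv); first by rewrite /balanced !cnt_block.
  by case: t Ht {Ew Ewv Hcnt}.
by move=> Ev; move: Hcnt; rewrite Ewv Ev cats0 cnt_block /=; lia.
Qed.

Lemma pattern_cnt r w : is_pattern r w ->
  [/\ cnt true w = r, cnt false w = r & head false w = true].
Proof.
case=> Hsize Hcnt Hhead.
have Ht : cnt true w = r by rewrite -Hcnt; apply: eq_count => -[].
by split=> //; have := cnt_true_false w; rewrite Hsize Ht; lia.
Qed.

Lemma mismatch_sym P Q : mismatch P Q -> mismatch Q P.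
Proof.
case=> [[HP HQ]|[[HP HQ]|[HP [HQ Hne]]]]; [by right; left | by left |].
by right; right; do 2!split=> //; move=> lQ lP HlQ HlP /esym; apply: Hne.
Qed.

Lemma mismatch_collectable_l P Q : collectable P ->
  (collectable Q -> forall lP lQ, decomp P lP -> decomp Q lQ -> lP <> lQ) -> mismatch P Q.
Proof.
move=> HP Hne; case: (classic (collectable Q)) => HQ; last by left.
by right; right; do 2!split=> //; apply: Hne.
Qed.

Lemma mismatch_decomp P Q lP lQ : decomp P lP -> decomp Q lQ -> lP <> lQ -> mismatch P Q.
Proof.
move=> HlP HlQ Hne; apply: mismatch_collectable_l; first by exists lP.
by move=> _ lP' lQ' /(decomp_uniq HlP) <- /(decomp_uniq HlQ) <-.
Qed.

Definition shrink_head (l : seq nat) : seq nat :=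
  if l is t :: l' then filter (fun t => 0 < t) (t.-1 :: l') else [::].

Definition shrink_last (l : seq nat) : seq nat := rev (shrink_head (rev l)).

Arguments shrink_head : simpl never.

Lemma decomp_pdel1 bs : all pos_block bs ->
  decomp (pdel 1 (blocks bs)) (shrink_head (map snd bs)).
Proof.
case: bs => [|[b t] bs] /=; first by exists [::].
case/andP=> /= Ht _; rewrite blocks_cons pdel_block_cat //= Ht.
exact: (decomp_blocks_filter ((b, t.-1) :: bs)).
Qed.

Lemma pdel_blocks_rcons bs b t : all pos_block bs -> 0 < t ->
  pdel (sumn (map snd bs) + t) (blocks (rcons bs (b, t))) = blocks (rcons bs (b, t.-1)).
Proof.
elim: bs => [|[b' t'] bs IH] /=.
  by move=> _ Ht; rewrite !blocks_cons pdel_block_cat // leqnn.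
case/andP=> Ht' Hbs Ht; rewrite !blocks_cons /= pdel_block_cat ?ifF; try lia.
by rewrite -IH //; congr (_ ++ pdel _ _); lia.
Qed.

Lemma decomp_pdel_last bs : all pos_block bs ->
  decomp (pdel (sumn (map snd bs)) (blocks bs)) (shrink_last (map snd bs)).
Proof.
case/lastP: bs => [|bs [b t]]; first by exists [::].
rewrite all_rcons map_rcons sumn_rcons => /andP [Ht Hbs].
rewrite pdel_blocks_rcons // /shrink_last rev_rcons /shrink_head -filter_rev rev_cons revK.
by rewrite -(map_rcons snd bs (b, t.-1)); apply: decomp_blocks_filter.
Qed.

Lemma shrink_head_cons t l : 0 < t -> all (fun s => 0 < s) l ->
  shrink_head (t :: l) = if t == 1 then l else t.-1 :: l.
Proof.
move=> Ht Hl; rewrite /shrink_head /= (all_filterP Hl).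
by case: (t =P 1) => [-> //|Ht1]; rewrite ifT //; lia.
Qed.

Lemma shrink_last_cons t l : 0 < t -> l != [::] -> shrink_last (t :: l) = t :: shrink_last l.
Proof.
move=> Ht; case/lastP: l => [//|l z] _.
rewrite /shrink_last rev_cons !rev_rcons rcons_cons /shrink_head -rcons_cons.
by rewrite filter_rcons Ht rev_rcons.
Qed.

Lemma shrink_inj l m : all (fun t => 0 < t) l -> all (fun t => 0 < t) m ->
  sumn l = sumn m -> 2 < sumn l ->
  shrink_head l = shrink_head m -> shrink_last l = shrink_last m -> l = m.
Proof.
wlog Hlm : l m / (head 0 l <= head 0 m).
  move=> WL Hl Hm Hs ? Hh Hr; case: (leqP (head 0 l) (head 0 m)) => ?; first exact: WL.
  by apply/esym/WL => //; lia.
case: l m Hlm => [|x l] [|y m] //= Hxy; rewrite ?andbT //; try lia.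
case/andP=> Hx Hl /andP [Hy Hm] Hs Hs3; rewrite !shrink_head_cons //.
case: (x =P 1) => [Ex|Ex]; case: (y =P 1) => [Ey|Ey]; try (by move=> ->; rewrite ?Ex ?Ey); try lia.
  move=> El; subst x l; case: m Hl Hm Hs Hs3 => [|z m] _ Hm Hs Hs3.
    rewrite shrink_last_cons // {2}/shrink_last /= shrink_head_cons //= ifF.
      by change (rev [:: y.-1]) with [:: y.-1] => -[Ey1 _]; move: Hs3 => /=; lia.
    by apply/eqP.
  by rewrite (@shrink_last_cons 1) ?(@shrink_last_cons y) // => -[] /esym.
by case=> Exy -> _; congr (_ :: _); lia.
Qed.

Lemma shrink_size l : all (fun t => 0 < t) l -> 1 < size l -> 2 < sumn l ->
  1 < size (shrink_head l) \/ 1 < size (shrink_last l).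
Proof.
case: l => [|x [|y l]] //= /and3P [Hx Hy Hl] _ Hs.
rewrite shrink_head_cons /= ?Hy //; case: (x =P 1) => [Ex|]; last by left.
case: l Hl Hs => [|z l] Hl Hs; last by left.
right; rewrite shrink_last_cons // /shrink_last (_ : rev [:: y] = [:: y]) //.
by rewrite shrink_head_cons // ifF //; apply/eqP; move: Hs => /=; lia.
Qed.

Lemma pdel_mismatch_decomp r P Q lP lQ : 2 < r -> cnt true P = r -> cnt true Q = r ->
  decomp P lP -> decomp Q lQ -> lP <> lQ ->
  exists2 j, 1 <= j <= r & mismatch (pdel j P) (pdel j Q).
Proof.
move=> Hr HPr HQr [bsP [HbsP + <-]] [bsQ [HbsQ + <-]] Hne.
rewrite -/(blocks bsP) -/(blocks bsQ) => EP EQ; subst P Q.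
rewrite !cnt_blocks in HPr HQr.
have [Hh|Hh] := eqVneq (shrink_head (map snd bsP)) (shrink_head (map snd bsQ)).
  have [Hl|Hl] := eqVneq (shrink_last (map snd bsP)) (shrink_last (map snd bsQ)).
    by case: Hne; apply: shrink_inj; rewrite ?all_map ?HPr ?HQr.
  exists r; first lia.
  have := mismatch_decomp (decomp_pdel_last HbsP) (decomp_pdel_last HbsQ).
  by rewrite HPr HQr; apply; apply/eqP.
exists 1; first lia.
exact: (mismatch_decomp (decomp_pdel1 HbsP) (decomp_pdel1 HbsQ) (elimN eqP Hh)).
Qed.

Lemma pdel2_eq_block w b t : 1 < t -> head false w = true -> cnt false w = t.+1 ->
  pdel 2 w = block b t -> w = block true t.+1.
Proof.
case: t => [|t] // Ht; case: w => [|[] [|[] w]] //= _; rewrite /pdel /= ?cnt_cons /=.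
  rewrite !add0n => Hw [<-] /del_occ_preimage_r [] //; first by rewrite cnt_nseq.
  move=> v Ewv; rewrite cnt_nseq subn0 => Ev.
  rewrite Ewv (@del_occ_eq_nseq false 2 t.+1 v) //.
  by move: Hw; rewrite Ewv cnt_cat cnt_nseq; lia.
by case: t Ht => [|t] // _; case: b => -[].
Qed.

(* j = 1 would not do: Q = AABABB has Q^{-1} = AABB. *)
Lemma pdel_mismatch_single_block r b Q : 2 < r -> head false Q = true -> cnt false Q = r ->
  ~ collectable Q -> mismatch (pdel 2 (block b r)) (pdel 2 Q).
Proof.
case: r => [|r] // Hr HQh HQf HQ; rewrite pdel_block /=; last lia.
have HdP : decomp (block b r) [:: r] by apply: decomp_block; lia.
apply: mismatch_collectable_l => [|_ lP lQ]; first by exists [:: r].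
move=> /(decomp_uniq HdP) <- HdQ Els; rewrite -{}Els in HdQ.
have [c /pdel2_eq_block EQ] := decomp_single HdQ.
by apply: HQ; rewrite EQ //; exists [:: r.+1]; apply: decomp_block.
Qed.

Lemma pdel_mismatch_indecomposable r P Q : 2 < r -> cnt true P = r ->
  head false Q = true -> cnt true Q = r -> cnt false Q = r ->
  collectable P -> ~ collectable Q -> indecomposable Q ->
  exists2 j, 1 <= j <= r & mismatch (pdel j P) (pdel j Q).
Proof.
move=> Hr HPr HQh HQr HQf /collectableP [bs Hbs EP] HQ HQi; subst P.
rewrite cnt_blocks in HPr.
case: bs Hbs HPr => [|[b t] [|bt bs]] Hbs HPr; first by move: HPr => /=; lia.
  exists 2; first lia.
  have -> : t = r by move: HPr => /=; lia.
  by rewrite blocks1; apply: pdel_mismatch_single_block.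
set l := map snd _ in HPr.
have Hl : all (fun t => 0 < t) l by rewrite all_map.
case: (shrink_size Hl isT ltac:(lia)) => Hs.
  exists 1; first lia.
  apply: mismatch_collectable_l => [|_ lP lQ]; first exact/collectable_pdel/collectable_blocks.
  move=> /(decomp_uniq (decomp_pdel1 Hbs)) <- /(decomp_pdel1_indecomposable HQi) HlQ El.
  by move: Hs; rewrite El; lia.
exists r; first lia.
apply: mismatch_collectable_l => [|_ lP lQ]; first exact/collectable_pdel/collectable_blocks.
rewrite -{1}HPr => /(decomp_uniq (decomp_pdel_last Hbs)) <-.
rewrite -HQr => /(decomp_pdel_last_indecomposable HQi) HlQ El.
by move: Hs; rewrite El; lia.
Qed.

Lemma pdel_mismatch_not_collectable r P Q : 2 < r -> is_pattern r P -> is_pattern r Q ->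
  collectable P -> ~ collectable Q ->
  exists2 j, 1 <= j <= r & mismatch (pdel j P) (pdel j Q).
Proof.
move=> Hr /pattern_cnt [HPr _ _] /pattern_cnt [HQr HQf HQh] HP HQ.
have mismatch_at j : ~ collectable (pdel j Q) -> mismatch (pdel j P) (pdel j Q).
  by move=> HQj; apply: mismatch_collectable_l => [|/HQj //]; apply: collectable_pdel.
have [E [R [EQ HE HR]]] : exists E R, [/\ Q = E ++ R, indecomposable E & balanced R].
  by apply: balanced_first_return; [rewrite /balanced HQr HQf | case: (Q) HQh].
have [R0|/eqP HR0] := eqVneq R [::].
  by apply: pdel_mismatch_indecomposable; rewrite // EQ R0 cats0.
case: (classic (exists b t, E = block b t)) => [[b [t EE]]|Hnb].
  have Ht : 0 < t by case: t EE => // EE; case: HE; rewrite EE.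
  exists 1; first lia.
  apply: mismatch_at; rewrite EQ EE pdel_block_cat // Ht => /collectable_block_cat HRc.
  by apply: HQ; rewrite EQ EE; apply/collectable_block_cat.
have [_ HEb _] := HE.
exists r; first lia.
apply: mismatch_at; rewrite EQ pdel_catr //; last first.
  by move: HQr (balanced_cnt_gt0 HR HR0); rewrite EQ cnt_cat; lia.
by apply: not_collectable_indecomposable_cat => // b t EE; apply: Hnb; exists b, t.
Qed.

Theorem mainTheorem8 (r : nat) (P Q : seq bool) :
  3 <= r -> is_pattern r P -> is_pattern r Q -> mismatch P Q ->
  exists2 j, 1 <= j <= r & mismatch (pdel j P) (pdel j Q).
Proof.
move=> Hr HP HQ [[HPc HQc]|[[HPc HQc]|[[lP HlP] [[lQ HlQ] Hne]]]].
- exact: pdel_mismatch_not_collectable.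
- have [j Hj Hm] := pdel_mismatch_not_collectable Hr HQ HP HQc HPc.
  by exists j => //; apply: mismatch_sym.
- have [HPr _ _] := pattern_cnt HP; have [HQr _ _] := pattern_cnt HQ.
  exact: (pdel_mismatch_decomp Hr HPr HQr HlP HlQ (Hne _ _ HlP HlQ)).
Qed.
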